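(* Let $G$ be a finite graph and $\mathbf{Y}=\lim_{z\to\infty}\mathbf{Y}(z)\in[0,\infty]^{\vec E}$ (a monotone limit). Then $\mathbf{Y}$ is the smallest solution in $[0,\infty]^{\vec E}$ of the fixed point equation $\mathbf{Y}=\mathcal{Q}_G(\mathcal{R}_G(\mathbf{Y}))$.
   Context: $\vec E$: directed edges; $\partial u$: neighbours of $u$; empty sums are $0$. $\mathbf{Y}(z)\in(0,\infty)^{\vec E}$ is the unique solution of $Y_{u\to v}=z/(1+\sum_{w\in\partial u\setminus v}Y_{w\to u})$ (the limit of LABP), and it is non-decreasing in $z$. $\mathcal{R}_G:[0,\infty]^{\vec E}\to[0,1]^{\vec E}$ is $\mathcal{R}_{u\to v}(\mathbf{Y})=1/(1+\sum_{w\in\partial u\setminus v}Y_{w\to u})$, with value $0$ if some $Y_{w\to u}=\infty$, $w\in\partial u\setminus v$. $\mathcal{Q}_G:[0,1]^{\vec E}\to(0,\infty]^{\vec E}$ is $\mathcal{Q}_{u\to v}(\mathbf{X})=1/\sum_{w\in\partial u\setminus v}X_{w\to u}$ with $1/0=\infty$ (so $\mathcal{Q}_{u\to v}(\mathbf{X})=\infty$ if all these $X_{w\to u}$ are $0$ or the sum is empty). Order is componentwise. *)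

From Stdlib Require Import Bool Reals List Arith.
Import ListNotations.
Open Scope R_scope.

(* Extended nonnegative-real values: [0,oo] is represented by xR with
   Fin r (r >= 0 imposed separately) and Inf = +oo. *)
Inductive xR : Type := Fin (r : R) | Inf.

Definition xle (a b : xR) : Prop :=
  match a, b with
  | Fin x, Fin y => x <= y
  | _, Inf => True
  | Inf, Fin _ => False
  end.

Definition xnonneg (a : xR) : Prop :=
  match a with Fin r => 0 <= r | Inf => True end.

Definition xadd (a b : xR) : xR :=
  match a, b with Fin x, Fin y => Fin (x + y) | _, _ => Inf end.

Definition xsum (l : list xR) : xR := fold_right xadd (Fin 0) l.
Definition Rsum (l : list R) : R := fold_right Rplus 0 l.

(* A finite simple graph on vertices 0..n-1 given by a boolean adjacency
   relation adj (assumed symmetric and irreflexive in the theorem).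
   Vectors indexed by directed edges are functions nat -> nat -> _ ;
   only their values on directed edges matter. *)

Definition nbrs (n : nat) (adj : nat -> nat -> bool) (u v : nat) : list nat :=
  filter (fun w => adj w u && negb (Nat.eqb w v)) (seq 0 n).

Definition RG (n : nat) (adj : nat -> nat -> bool) (Y : nat -> nat -> xR)
    (u v : nat) : R :=
  match xsum (map (fun w => Y w u) (nbrs n adj u v)) with
  | Inf => 0
  | Fin s => / (1 + s)
  end.

(* Q_G : [0,1]^E -> (0,oo]^E, with 1/0 = oo (also for empty sums). *)
Definition QG (n : nat) (adj : nat -> nat -> bool) (X : nat -> nat -> R)
    (u v : nat) : xR :=
  let s := Rsum (map (fun w => X w u) (nbrs n adj u v)) in
  if Req_EM_T s 0 then Inf else Fin (/ s).

Definition tends_to_infty (f : R -> R) (l : xR) : Prop :=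
  match l with
  | Fin L => forall eps, 0 < eps -> exists M, forall z, M < z -> Rabs (f z - L) < eps
  | Inf => forall B, exists M, forall z, M < z -> B < f z
  end.

Definition is_edge (n : nat) (adj : nat -> nat -> bool) (u v : nat) : Prop :=
  (u < n)%nat /\ (v < n)%nat /\ adj u v = true.

From Stdlib Require Import Bool Reals List Arith.
From Stdlib Require Import Lra Lia.
From Coquelicot Require Import Coquelicot.
Open Scope R_scope.

(* Write S_z(u->v) = sum_{w in du\v} Y_z(w->u) for the incoming
   sum, so that Y_z = z/(1+S_z), and T_z(u->v) = sum_{w in du\v} 1/(1+S_z(w->u)).
   Substituting the fixed-point equation into S_z gives S_z = z T_z, hence
   Y_z = 1/(1/z + T_z).
   - Fixed point: as z -> oo, 1/(1+S_z) -> R_G(Y) (this is 0 when a summand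
     diverges), so T_z -> sum R_G(Y) =: t, and 1/(1/z + T_z) -> 1/t, read as
     oo when t = 0; that is exactly Y = Q_G(R_G(Y)).
   - Minimality: let Y' be any fixed point and z > 0.  Let c be the largest
     ratio Y_z(e)/Y'(e) over directed edges (0 where Y'(e) = oo).  If c > 1,
     the bound Y_z <= c Y' propagates through R_G and Q_G to the strict bound
     Y_z(e) < c Y'(e) at every edge with Y'(e) finite, contradicting the
     maximality of c.  So Y_z <= Y' for all z, and Y <= Y' in the limit. *)

Definition toR (a : xR) : Rbar :=
  match a with Fin r => Finite r | Inf => p_infty end.

Lemma toR_inj (a b : xR) : toR a = toR b -> a = b.
Proof. destruct a, b; simpl; intro H; try discriminate; now inversion H. Qed.

Lemma is_lim_of_tends (f : R -> R) (l : xR) :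
  tends_to_infty f l -> is_lim f p_infty (toR l).
Proof.
  intros H. apply is_lim_spec. destruct l as [L|]; simpl in *.
  - intros eps. exact (H eps (cond_pos eps)).
  - exact H.
Qed.

Lemma tends_unique (f : R -> R) (a b : xR) :
  tends_to_infty f a -> is_lim f p_infty (toR b) -> a = b.
Proof.
  intros Ha Hb. apply toR_inj.
  rewrite <- (is_lim_unique _ _ _ (is_lim_of_tends _ _ Ha)).
  now apply is_lim_unique.
Qed.

(* 1/(1/z + T z) tends to 1/t (to +oo if t = 0) when T >= 0 tends to t:
   this is the shape of Q_G in the limit. *)
Lemma is_lim_inv_recip_plus (T : R -> R) (t : R) :
  (forall z, 0 < z -> 0 <= T z) -> is_lim T p_infty t ->
  is_lim (fun z => / (/ z + T z)) p_infty
    (toR (if Req_EM_T t 0 then Inf else Fin (/ t))).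
Proof.
  intros Tnn HT.
  assert (Hinvz : is_lim (fun z => / z) p_infty 0).
  { change (Finite 0) with (Rbar_inv p_infty).
    apply is_lim_inv; [apply is_lim_id | discriminate]. }
  assert (HD : is_lim (fun z => / z + T z) p_infty t).
  { replace (Finite t) with (Rbar_plus 0 t) by (simpl; f_equal; ring).
    now apply is_lim_plus with 0 t. }
  destruct (Req_EM_T t 0) as [->|ne]; simpl.
  - apply is_lim_Rinv_0_right; [exact HD|].
    exists 0. intros z Hz. pose proof (Tnn z Hz).
    assert (0 < / z) by (apply Rinv_0_lt_compat; lra). lra.
  - change (Finite (/ t)) with (Rbar_inv (Finite t)).
    apply is_lim_inv; [exact HD | congruence].
Qed.

Lemma is_lim_inv_one_plus (S : R -> R) (s : xR) :
  xnonneg s -> is_lim S p_infty (toR s) ->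
  is_lim (fun z => / (1 + S z)) p_infty
    (Finite (match s with Inf => 0 | Fin s => / (1 + s) end)).
Proof.
  intros Hs HS.
  assert (H1S : is_lim (fun z => 1 + S z) p_infty (Rbar_plus 1 (toR s))).
  { apply is_lim_plus with 1 (toR s); [apply is_lim_const | exact HS |].
    destruct s; reflexivity. }
  destruct s as [s|]; simpl in *.
  - change (Finite (/ (1 + s))) with (Rbar_inv (Finite (1 + s))).
    apply is_lim_inv; [exact H1S | intro H; injection H; lra].
  - change (Finite 0) with (Rbar_inv p_infty).
    apply is_lim_inv; [exact H1S | discriminate].
Qed.

Lemma Rsum_scal (z : R) (f : nat -> R) (l : list nat) :
  Rsum (map (fun w => z * f w) l) = z * Rsum (map f l).
Proof. unfold Rsum; induction l; simpl; [ring | rewrite IHl; ring]. Qed.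

Lemma Rsum_nonneg (f : nat -> R) (l : list nat) :
  (forall w, In w l -> 0 <= f w) -> 0 <= Rsum (map f l).
Proof.
  unfold Rsum; induction l as [|a l IH]; simpl; intros H; [lra|].
  pose proof (H a (or_introl eq_refl)).
  assert (0 <= fold_right Rplus 0 (map f l)) by (apply IH; auto). lra.
Qed.

Lemma Rsum_le (f g : nat -> R) (l : list nat) :
  (forall w, In w l -> f w <= g w) -> Rsum (map f l) <= Rsum (map g l).
Proof.
  unfold Rsum; induction l as [|a l IH]; simpl; intros H; [lra|].
  pose proof (H a (or_introl eq_refl)).
  assert (fold_right Rplus 0 (map f l) <= fold_right Rplus 0 (map g l))
    by (apply IH; auto). lra.
Qed.

Lemma xsum_nonneg (f : nat -> xR) (l : list nat) :
  (forall w, In w l -> xnonneg (f w)) -> xnonneg (xsum (map f l)).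
Proof.
  unfold xsum; induction l as [|a l IH]; simpl; intros H; [lra|].
  pose proof (H a (or_introl eq_refl)) as Ha.
  assert (Hl : xnonneg (fold_right xadd (Fin 0) (map f l))) by (apply IH; auto).
  destruct (f a), (fold_right xadd (Fin 0) (map f l)); simpl in *; auto; lra.
Qed.

Lemma Rsum_lim (l : list nat) (F : nat -> R -> R) (G : nat -> R) :
  (forall w, In w l -> is_lim (F w) p_infty (G w)) ->
  is_lim (fun z => Rsum (map (fun w => F w z) l)) p_infty (Rsum (map G l)).
Proof.
  unfold Rsum; induction l as [|a l IH]; simpl; intros H.
  - apply is_lim_const.
  - apply is_lim_plus with (G a) (fold_right Rplus 0 (map G l)); auto.
    reflexivity.
Qed.

Lemma xsum_lim (l : list nat) (F : nat -> R -> R) (G : nat -> xR) :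
  (forall w, In w l -> is_lim (F w) p_infty (toR (G w))) ->
  is_lim (fun z => Rsum (map (fun w => F w z) l)) p_infty (toR (xsum (map G l))).
Proof.
  unfold Rsum, xsum; induction l as [|a l IH]; simpl; intros H.
  - apply is_lim_const.
  - apply is_lim_plus with (toR (G a)) (toR (fold_right xadd (Fin 0) (map G l)));
      auto.
    destruct (G a), (fold_right xadd (Fin 0) (map G l)); reflexivity.
Qed.

Lemma xsum_bound (l : list nat) (f : nat -> xR) (g : nat -> R) (c s : R) :
  xsum (map f l) = Fin s ->
  (forall x, In x l -> forall y, f x = Fin y -> g x <= c * y) ->
  Rsum (map g l) <= c * s.
Proof.
  unfold xsum, Rsum. revert s. induction l as [|a l IH]; simpl; intros s H Hb.
  - injection H; intros <-. lra.
  - destruct (f a) eqn:Ea, (fold_right xadd (Fin 0) (map f l)) eqn:El;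
      simpl in H; try discriminate.
    injection H; intros <-.
    assert (g a <= c * r) by (apply Hb; auto).
    assert (fold_right Rplus 0 (map g l) <= c * r0) by (apply IH; auto).
    lra.
Qed.

Lemma nbrs_edge (n : nat) (adj : nat -> nat -> bool) (u v w : nat) :
  is_edge n adj u v -> In w (nbrs n adj u v) -> is_edge n adj w u.
Proof.
  intros [Hu [_ _]] Hw. unfold nbrs in Hw.
  rewrite filter_In, in_seq in Hw. destruct Hw as [Hwn Hw].
  apply andb_prop in Hw as [Hwu _]. repeat split; auto; lia.
Qed.

Definition edge_list (n : nat) (adj : nat -> nat -> bool) : list (nat * nat) :=
  filter (fun p => Nat.ltb (fst p) n && Nat.ltb (snd p) n && adj (fst p) (snd p))
    (list_prod (seq 0 n) (seq 0 n)).

Lemma edge_list_spec (n : nat) (adj : nat -> nat -> bool) (a b : nat) :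
  In (a, b) (edge_list n adj) <-> is_edge n adj a b.
Proof.
  unfold edge_list, is_edge. rewrite filter_In, in_prod_iff, !in_seq; simpl.
  rewrite !andb_true_iff, !Nat.ltb_lt.
  split; [intros [_ [[Ha Hb] E]] | intros [Ha [Hb E]]]; repeat split; auto; lia.
Qed.

Lemma argmax {A : Type} (f : A -> R) (l : list A) :
  l <> nil -> exists m, In m l /\ forall x, In x l -> f x <= f m.
Proof.
  induction l as [|a l IH]; intros H; [congruence|].
  destruct l as [|b l'].
  - exists a. split; [now left|]. intros x [<-|[]]; lra.
  - destruct IH as [m [Hm Hx]]; [discriminate|].
    destruct (Rle_dec (f a) (f m)).
    + exists m. split; [now right|]. intros x [<-|Hx']; auto.
    + exists a. split; [now left|]. intros x [<-|Hx']; [lra|].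
      specialize (Hx x Hx'); lra.
Qed.

Section LABP.

Variables (n : nat) (adj : nat -> nat -> bool) (Yz : R -> nat -> nat -> R).

Hypothesis HYz : forall z, 0 < z -> forall u v, is_edge n adj u v ->
  0 < Yz z u v /\
  Yz z u v = z / (1 + Rsum (map (fun w => Yz z w u) (nbrs n adj u v))).

Definition Sin (z : R) (u v : nat) : R :=
  Rsum (map (fun w => Yz z w u) (nbrs n adj u v)).

Definition Tin (z : R) (u v : nat) : R :=
  Rsum (map (fun w => / (1 + Sin z w u)) (nbrs n adj u v)).

Lemma Sin_nonneg z u v : 0 < z -> is_edge n adj u v -> 0 <= Sin z u v.
Proof.
  intros Hz He. apply Rsum_nonneg. intros w Hw.
  apply Rlt_le, (HYz z Hz). exact (nbrs_edge _ _ _ _ _ He Hw).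
Qed.

Lemma Tin_nonneg z u v : 0 < z -> is_edge n adj u v -> 0 <= Tin z u v.
Proof.
  intros Hz He. apply Rsum_nonneg. intros w Hw.
  pose proof (Sin_nonneg z w u Hz (nbrs_edge _ _ _ _ _ He Hw)).
  apply Rlt_le, Rinv_0_lt_compat. lra.
Qed.

Lemma Sin_Tin z u v : 0 < z -> is_edge n adj u v -> Sin z u v = z * Tin z u v.
Proof.
  intros Hz He. unfold Tin. rewrite <- Rsum_scal. unfold Sin at 1.
  apply f_equal, map_ext_in. intros w Hw.
  exact (proj2 (HYz z Hz w u (nbrs_edge _ _ _ _ _ He Hw))).
Qed.

(* Hence Y_z = 1/(1/z + T_z), a form whose limit as z -> oo is transparent. *)
Lemma Yz_Tin z u v : 0 < z -> is_edge n adj u v ->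
  Yz z u v = / (/ z + Tin z u v).
Proof.
  intros Hz He. destruct (HYz z Hz u v He) as [_ ->].
  change (z / (1 + Sin z u v) = / (/ z + Tin z u v)). rewrite (Sin_Tin z u v Hz He).
  pose proof (Tin_nonneg z u v Hz He).
  assert (0 < / z) by (apply Rinv_0_lt_compat; lra).
  assert (0 < z * Tin z u v + 1) by nra.
  field. repeat split; nra.
Qed.

Section Limit.

Variable Ylim : nat -> nat -> xR.
Hypothesis Hlim : forall u v, is_edge n adj u v ->
  tends_to_infty (fun z => Yz z u v) (Ylim u v).

Lemma Ylim_nonneg u v : is_edge n adj u v -> xnonneg (Ylim u v).
Proof.
  intros He. pose proof (is_lim_of_tends _ _ (Hlim u v He)) as H.
  destruct (Ylim u v) as [r|]; simpl in *; auto.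
  change (Rbar_le 0 r).
  apply (is_lim_le_loc (fun _ => 0) (fun z => Yz z u v) p_infty); auto.
  - exists 0. intros z Hz. apply Rlt_le, (HYz z Hz u v He).
  - apply is_lim_const.
Qed.

Lemma Tin_lim u v : is_edge n adj u v ->
  is_lim (fun z => Tin z u v) p_infty
    (Rsum (map (fun w => RG n adj Ylim w u) (nbrs n adj u v))).
Proof.
  intros He. apply (Rsum_lim _ (fun w z => / (1 + Sin z w u))). intros w Hw.
  pose proof (nbrs_edge _ _ _ _ _ He Hw) as Hwu.
  apply (is_lim_inv_one_plus (fun z => Sin z w u)
           (xsum (map (fun x => Ylim x w) (nbrs n adj w u)))).
  - apply xsum_nonneg. intros x Hx. exact (Ylim_nonneg _ _ (nbrs_edge _ _ _ _ _ Hwu Hx)).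
  - apply (xsum_lim _ (fun x z => Yz z x w)). intros x Hx.
    exact (is_lim_of_tends _ _ (Hlim _ _ (nbrs_edge _ _ _ _ _ Hwu Hx))).
Qed.

Lemma Ylim_fixed_point u v : is_edge n adj u v ->
  Ylim u v = QG n adj (RG n adj Ylim) u v.
Proof.
  intros He. apply (tends_unique (fun z => Yz z u v)); [exact (Hlim u v He)|].
  apply is_lim_ext_loc with (fun z => / (/ z + Tin z u v)).
  - exists 0. intros z Hz. symmetry. exact (Yz_Tin z u v Hz He).
  - apply is_lim_inv_recip_plus; [|exact (Tin_lim u v He)].
    intros z Hz. exact (Tin_nonneg z u v Hz He).
Qed.

End Limit.

Section Minimality.

Variable Y' : nat -> nat -> xR.
Hypothesis HY' : forall u v, is_edge n adj u v ->
  xnonneg (Y' u v) /\ Y' u v = QG n adj (RG n adj Y') u v.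

Lemma RG_fixed_nonneg w a : is_edge n adj w a -> 0 <= RG n adj Y' w a.
Proof.
  intros He. unfold RG.
  assert (Hx : xnonneg (xsum (map (fun x => Y' x w) (nbrs n adj w a)))).
  { apply xsum_nonneg. intros x Hx. apply HY', (nbrs_edge _ _ _ _ _ He Hx). }
  destruct (xsum _); simpl in Hx; [|lra].
  apply Rlt_le, Rinv_0_lt_compat. lra.
Qed.

Lemma fixed_point_fin p q ym : is_edge n adj p q -> Y' p q = Fin ym ->
  let s := Rsum (map (fun w => RG n adj Y' w p) (nbrs n adj p q)) in
  0 < s /\ ym = / s.
Proof.
  intros He Hym s. destruct (HY' p q He) as [_ E]. rewrite Hym in E.
  unfold QG in E. fold s in E.
  destruct (Req_EM_T s 0) as [_|ne]; [discriminate|].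
  injection E as ->. split; [|reflexivity].
  assert (0 <= s).
  { apply Rsum_nonneg. intros w Hw. apply RG_fixed_nonneg, (nbrs_edge _ _ _ _ _ He Hw). }
  lra.
Qed.

Lemma fixed_point_fin_pos p q ym : is_edge n adj p q -> Y' p q = Fin ym -> 0 < ym.
Proof.
  intros He Hym. destruct (fixed_point_fin p q ym He Hym) as [Hs ->].
  now apply Rinv_0_lt_compat.
Qed.

Variables (z c : R).
Hypotheses (Hz : 0 < z) (Hc : 1 < c).

(* The comparison Y_z <= c Y' (on the finite entries of Y') ... *)
Hypothesis Hbound : forall x y, is_edge n adj x y ->
  forall yv, Y' x y = Fin yv -> Yz z x y <= c * yv.

(* ... passes to R_G with the factor c, using c >= 1 ... *)
Lemma RG_le_scaled w p : is_edge n adj w p ->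
  RG n adj Y' w p <= c * / (1 + Sin z w p).
Proof.
  intros Hwp. pose proof (Sin_nonneg z w p Hz Hwp).
  assert (Hpos : 0 < c * / (1 + Sin z w p))
    by (apply Rmult_lt_0_compat; [lra | apply Rinv_0_lt_compat; lra]).
  unfold RG.
  assert (Hsum : xnonneg (xsum (map (fun x => Y' x w) (nbrs n adj w p)))).
  { apply xsum_nonneg. intros x Hx. apply HY', (nbrs_edge _ _ _ _ _ Hwp Hx). }
  destruct (xsum _) as [s|] eqn:Es; simpl in Hsum; [|lra].
  assert (HS : Sin z w p <= c * s).
  { apply (xsum_bound _ (fun x => Y' x w) _ _ _ Es).
    intros x Hx y Hy. apply Hbound; [exact (nbrs_edge _ _ _ _ _ Hwp Hx) | exact Hy]. }
  replace (c * / (1 + Sin z w p)) with (/ ((1 + Sin z w p) / c)) by (field; lra).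
  apply Rinv_le_contravar.
  - apply Rdiv_lt_0_compat; lra.
  - apply Rmult_le_reg_r with c; [lra|].
    replace ((1 + Sin z w p) / c * c) with (1 + Sin z w p) by (field; lra). nra.
Qed.

(* ... and then through Q_G to a strict inequality, since 1/z > 0. *)
Lemma Yz_lt_scaled p q ym : is_edge n adj p q -> Y' p q = Fin ym ->
  Yz z p q < c * ym.
Proof.
  intros Hpq Hym. destruct (fixed_point_fin p q ym Hpq Hym) as [Hs ->].
  set (s := Rsum _) in *.
  assert (HsT : s <= c * Tin z p q).
  { unfold Tin. rewrite <- Rsum_scal. apply Rsum_le. intros w Hw.
    apply RG_le_scaled, (nbrs_edge _ _ _ _ _ Hpq Hw). }
  rewrite (Yz_Tin z p q Hz Hpq).
  replace (c * / s) with (/ (s / c)) by (field; lra).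
  apply Rinv_lt_contravar.
  - apply Rmult_lt_0_compat; [apply Rdiv_lt_0_compat; lra|].
    pose proof (Tin_nonneg z p q Hz Hpq).
    assert (0 < / z) by (apply Rinv_0_lt_compat; lra). lra.
  - assert (0 < / z) by (apply Rinv_0_lt_compat; lra).
    assert (s / c <= Tin z p q).
    { apply Rmult_le_reg_r with c; [lra|].
      replace (s / c * c) with s by (field; lra). lra. }
    lra.
Qed.

End Minimality.

(* Every fixed point Y' dominates every Y_z: otherwise the largest ratio
   Y_z/Y' exceeds 1 and [Yz_lt_scaled] contradicts its maximality. *)
Lemma Yz_le_fixed_point (Y' : nat -> nat -> xR) :
  (forall u v, is_edge n adj u v ->
     xnonneg (Y' u v) /\ Y' u v = QG n adj (RG n adj Y') u v) ->
  forall z, 0 < z -> forall a b, is_edge n adj a b -> xle (Fin (Yz z a b)) (Y' a b).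
Proof.
  intros HY' z Hz a b Hab.
  set (ratio := fun e : nat * nat => match Y' (fst e) (snd e) with
                  | Fin y => Yz z (fst e) (snd e) / y | Inf => 0 end).
  destruct (argmax ratio (edge_list n adj)) as [[p q] [Hm Hmax]].
  { intro H. pose proof (proj2 (edge_list_spec n adj a b) Hab) as Hin.
    now rewrite H in Hin. }
  apply edge_list_spec in Hm.
  set (c := ratio (p, q)) in Hmax.
  assert (Hbound : forall x y, is_edge n adj x y ->
            forall yv, Y' x y = Fin yv -> Yz z x y <= c * yv).
  { intros x y Hxy yv Hyv.
    pose proof (Hmax (x, y) (proj2 (edge_list_spec _ _ _ _) Hxy)) as H.
    unfold ratio at 1 in H; simpl in H. rewrite Hyv in H.
    pose proof (fixed_point_fin_pos Y' HY' x y yv Hxy Hyv).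
    replace (Yz z x y) with (Yz z x y / yv * yv) by (field; lra).
    apply Rmult_le_compat_r; lra. }
  assert (Hc1 : c <= 1).
  { destruct (Rle_lt_dec c 1) as [|Hgt]; [assumption|exfalso].
    destruct (Y' p q) as [ym|] eqn:Eym.
    - pose proof (Yz_lt_scaled Y' HY' z c Hz Hgt Hbound p q ym Hm Eym) as Hlt.
      assert (Hc : c = Yz z p q / ym) by (unfold c, ratio; simpl; now rewrite Eym).
      pose proof (fixed_point_fin_pos Y' HY' p q ym Hm Eym).
      rewrite Hc in Hlt. replace (Yz z p q / ym * ym) with (Yz z p q) in Hlt
        by (field; lra). lra.
    - assert (c = 0) by (unfold c, ratio; simpl; now rewrite Eym). lra. }
  destruct (Y' a b) as [yv|] eqn:Eab; simpl; [|exact I].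
  pose proof (Hbound a b Hab yv Eab).
  pose proof (fixed_point_fin_pos Y' HY' a b yv Hab Eab). nra.
Qed.

End LABP.

Theorem mainTheorem12 (n : nat) (adj : nat -> nat -> bool)
    (Hsym : forall u v, adj u v = adj v u)
    (Hirr : forall u, adj u u = false)
    (Yz : R -> nat -> nat -> R)
    (HYz : forall z, 0 < z -> forall u v, is_edge n adj u v ->
        0 < Yz z u v /\
        Yz z u v = z / (1 + Rsum (map (fun w => Yz z w u) (nbrs n adj u v))))
    (Ylim : nat -> nat -> xR)
    (Hlim : forall u v, is_edge n adj u v ->
        tends_to_infty (fun z => Yz z u v) (Ylim u v)) :
  (forall u v, is_edge n adj u v ->
      xnonneg (Ylim u v) /\ Ylim u v = QG n adj (RG n adj Ylim) u v) /\
  (forall Y' : nat -> nat -> xR,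
      (forall u v, is_edge n adj u v ->
          xnonneg (Y' u v) /\ Y' u v = QG n adj (RG n adj Y') u v) ->
      forall u v, is_edge n adj u v -> xle (Ylim u v) (Y' u v)).
Proof.
  split.
  - intros u v He. split.
    + exact (Ylim_nonneg n adj Yz HYz Ylim Hlim u v He).
    + exact (Ylim_fixed_point n adj Yz HYz Ylim Hlim u v He).
  - intros Y' HY' u v He.
    destruct (Y' u v) as [y|] eqn:Ey; [|now destruct (Ylim u v)].
    assert (Hle : Rbar_le (toR (Ylim u v)) y).
    { apply (is_lim_le_loc (fun z => Yz z u v) (fun _ => y) p_infty).
      - exists 0. intros z Hz.
        pose proof (Yz_le_fixed_point n adj Yz HYz Y' HY' z Hz u v He) as H.
        now rewrite Ey in H.
      - exact (is_lim_of_tends _ _ (Hlim u v He)).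
      - apply is_lim_const. }
    destruct (Ylim u v); exact Hle.
Qed.
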